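(* Let $(X,\Sigma)$ be a random pair valued in $\mathcal{X}\times\mathfrak{S}_n$ with $X\sim\mu$. Let $\mathcal{P}=\{\mathcal{C}_1,\dots,\mathcal{C}_K\}$ be a partition of $\mathcal{X}$ into $K\ge1$ measurable cells with $\mu(\mathcal{C}_k)>0$ for all $k$. Let $\mathcal{S}_{\mathcal{P}}$ be the set of rules of the form $s_{\mathcal{P},\bar\sigma}(x)=\sum_{k=1}^K\sigma_k\,\mathbb{I}\{x\in\mathcal{C}_k\}$ with $\bar\sigma=(\sigma_1,\dots,\sigma_K)\in\mathfrak{S}_n^K$. Then the set of minimizers of $\mathcal{R}$ over $\mathcal{S}_{\mathcal{P}}$ consists exactly of the rules $s_{\mathcal{P},\bar\sigma}$ such that, for every $k\in\{1,\dots,K\}$, $\sigma_k$ is a Kemeny median of $P_{\mathcal{C}_k}$. Moreover, $$\min_{s\in\mathcal{S}_{\mathcal{P}}}\mathcal{R}(s)=\sum_{k=1}^K\mu(\mathcal{C}_k)L^*_{P_{\mathcal{C}_k}}.$$ If in addition $P_{\mathcal{C}_k}\in\mathcal{T}$ for $1\le k\le K$, the risk minimizer over $\mathcal{S}_{\mathcal{P}}$ is unique and is given by $s^*_{\mathcal{P}}(x)=\sum_{k=1}^K\sigma^*_{P_{\mathcal{C}_k}}\,\mathbb{I}\{x\in\mathcal{C}_k\}$.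
   Context: $\mathfrak{S}_n$ is the set of permutations of $\{1,\dots,n\}$. The Kendall $\tau$ distance is $d_\tau(\sigma,\sigma')=\sum_{i<j}\mathbb{I}\{(\sigma(i)-\sigma(j))(\sigma'(i)-\sigma'(j))<0\}$. For a distribution $P$ on $\mathfrak{S}_n$: $L_P(\sigma)=\mathbb{E}_{\Sigma\sim P}[d_\tau(\Sigma,\sigma)]$, $L_P^*=\min_\sigma L_P(\sigma)$, and a Kemeny median of $P$ is any minimizer of $L_P$. For a measurable set $\mathcal{C}$ with $\mu(\mathcal{C})>0$, $P_{\mathcal{C}}$ is the conditional distribution of $\Sigma$ given $X\in\mathcal{C}$. $\mathcal{T}$ is the set of strictly stochastically transitive distributions. These are the $P$ whose pairwise probabilities $p_{i,j}=\mathbb{P}_{\Sigma\sim P}\{\Sigma(i)<\Sigma(j)\}$ satisfy (a) $p_{i,j}\ge1/2$ and $p_{j,k}\ge1/2\Rightarrow p_{i,k}\ge1/2$, and (b) $p_{i,j}\ne1/2$ for all $i<j$. For $P\in\mathcal{T}$ the Kemeny median is unique, denoted $\sigma^*_P$. The risk of a measurable rule $s:\mathcal{X}\to\mathfrak{S}_n$ is $\mathcal{R}(s)=\mathbb{E}[d_\tau(s(X),\Sigma)]$. *)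

From HB Require Import structures.
From mathcomp Require Import all_boot all_order all_algebra all_fingroup.
From mathcomp Require Import all_classical all_reals all_analysis.
Set Implicit Arguments. Unset Strict Implicit. Unset Printing Implicit Defensive.
Import Order.TTheory GRing.Theory Num.Theory.
Local Open Scope classical_set_scope.
Local Open Scope ring_scope.

(* Kendall tau distance on 'S_n (positions 'I_n, ranks s i : 'I_n) *)
Definition dtau (n : nat) (s t : 'S_n) : nat :=
  #|[set ij : 'I_n * 'I_n | (ij.1 < ij.2)%N &&
     (((s ij.1)%:Z - (s ij.2)%:Z) * ((t ij.1)%:Z - (t ij.2)%:Z) < 0)%R]|.

(* A distribution on 'S_n is given by its probability mass function. *)
Definition Lrisk (R : realType) (n : nat) (p : 'S_n -> R) (s : 'S_n) : R :=
  \sum_(t : 'S_n) p t * (dtau t s)%:R.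

Definition Lstar (R : realType) (n : nat) (p : 'S_n -> R) : R :=
  \big[Num.min/Lrisk p 1]_(t : 'S_n) Lrisk p t.

Definition kemeny_median (R : realType) (n : nat) (p : 'S_n -> R) (s : 'S_n) : Prop :=
  forall t : 'S_n, Lrisk p s <= Lrisk p t.

Definition pairwise_prob (R : realType) (n : nat) (p : 'S_n -> R) (i j : 'I_n) : R :=
  \sum_(t : 'S_n | (t i < t j)%N) p t.

Definition strictly_sst (R : realType) (n : nat) (p : 'S_n -> R) : Prop :=
  (forall i j k : 'I_n, 2^-1 <= pairwise_prob p i j -> 2^-1 <= pairwise_prob p j k ->
      2^-1 <= pairwise_prob p i k) /\
  (forall i j : 'I_n, (i < j)%N -> pairwise_prob p i j != 2^-1).

Definition condlaw (R : realType) (d : measure_display) (Omega : measurableType d)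
  (P : probability Omega R) (d' : measure_display) (T : measurableType d')
  (n : nat) (X : Omega -> T) (Sig : Omega -> 'S_n) (A : set T) : 'S_n -> R :=
  fun s => fine (P (X @^-1` A `&` Sig @^-1` [set s])) / fine (P (X @^-1` A)).

Definition prule (T : Type) (n K : nat) (C : 'I_K -> set T) (sb : 'I_K -> 'S_n)
  (x : T) : 'S_n :=
  if [pick k : 'I_K | `[< C k x >] ] is Some k then sb k else 1%g.

Definition risk (R : realType) (d : measure_display) (Omega : measurableType d)
  (P : probability Omega R) (d' : measure_display) (T : measurableType d')
  (n : nat) (X : Omega -> T) (Sig : Omega -> 'S_n) (s : T -> 'S_n) : \bar R :=
  (\int[P]_w ((dtau (s (X w)) (Sig w))%:R : R)%:E)%E.

(* The cells partition the space, so the risk of the rule with permutations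
   sigma_1, ..., sigma_K is sum_k mu(C_k) L_{P_{C_k}}(sigma_k): a positively
   weighted sum whose k-th term depends on sigma_k alone.  Hence a rule is a
   minimizer iff every sigma_k minimizes L_{P_{C_k}}, i.e. is a Kemeny median,
   and the minimal value is sum_k mu(C_k) L*_{P_{C_k}}.

   For uniqueness, write L_P(sigma) as the sum over pairs i < j of the
   probability that Sigma orders i and j against sigma.  Under strict
   stochastic transitivity "p_{i,j} > 1/2" is a strict total order on items,
   and ranking every item by the number of items beating it (Copeland) makes
   each pairwise term minimal; a permutation disagreeing with it on one pair
   pays strictly more on that pair, so it is the only Kemeny median. *)

From HB Require Import structures.
From mathcomp Require Import all_boot all_order all_algebra all_fingroup.
From mathcomp Require Import all_classical all_reals all_analysis.
From mathcomp Require Import measurable_realfun lra.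
Import Order.TTheory GRing.Theory Num.Theory.
Set Implicit Arguments. Unset Strict Implicit. Unset Printing Implicit Defensive.
Local Open Scope ring_scope.

Lemma in_set_boolE (T : Type) (b : T -> bool) (x : T) :
  (x \in ([set y | b y]%classic : set T)) = b x.
Proof. by apply/idP/idP; rewrite in_setE. Qed.

Section KendallTau.
Variables (R : realType) (n : nat).
Implicit Types (s t : 'S_n) (p : 'S_n -> R) (i j : 'I_n).

Lemma dtauC s t : dtau s t = dtau t s.
Proof. by apply: eq_card => ij; rewrite !in_set_boolE mulrC. Qed.

Lemma perm_ltnNgt t i j : i != j -> (t i < t j)%N = ~~ (t j < t i)%N.
Proof.
move=> nij; rewrite -leqNgt [(t i <= _)%N]leq_eqVlt.
by rewrite [_ == _]val_eqE (inj_eq perm_inj) (negbTE nij).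
Qed.

Lemma perm_discordE t s i j : i != j ->
  (((t i)%:Z - (t j)%:Z) * ((s i)%:Z - (s j)%:Z) < 0) =
  ((t i < t j)%N != (s i < s j)%N).
Proof.
move=> nij; have rank_neq (u : 'S_n) : (u i)%:Z - (u j)%:Z != 0.
  by rewrite subr_eq0 eqz_nat val_eqE (inj_eq perm_inj).
rewrite neq0_mulr_lt0 // !subr_lt0 !ltz_nat.
by case: (t i < t j)%N; case: (s i < s j)%N.
Qed.

Definition discord_prob p s i j :=
  if (s i < s j)%N then pairwise_prob p j i else pairwise_prob p i j.

Lemma Lrisk_discord p s :
  Lrisk p s = \sum_(ij : 'I_n * 'I_n | (ij.1 < ij.2)%N) discord_prob p s ij.1 ij.2.
Proof.
rewrite /Lrisk.
under eq_bigr do rewrite /dtau -sum1_card natr_sum mulr_sumr big_mkcond /=.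
rewrite exchange_big /= [RHS]big_mkcond /=; apply: eq_bigr => -[i j] _ /=.
case: ltnP => [ij|ji]; last first.
  by apply: big1 => t _; rewrite in_set_boolE /= ltnNge ji.
have nij : i != j by rewrite neq_ltn ij.
rewrite /discord_prob /pairwise_prob.
case: ifP => sij; rewrite [RHS]big_mkcond /=; apply: eq_bigr => t _;
  rewrite in_set_boolE /= ij perm_discordE // sij ?mulr1 ?mulr0.
- by rewrite (perm_ltnNgt t nij); case: (t j < t i)%N.
- by case: (t i < t j)%N.
Qed.

Lemma pairwise_prob_compl p i j : \sum_t p t = 1 -> i != j ->
  pairwise_prob p i j + pairwise_prob p j i = 1.
Proof.
move=> p1 nij; rewrite -p1 (bigID (fun t : 'S_n => (t i < t j)%N)) /=.
by congr (_ + _); apply: eq_bigl => t; rewrite (perm_ltnNgt t nij) negbK.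
Qed.

Lemma pairwise_probxx p i : pairwise_prob p i i = 0.
Proof. by rewrite /pairwise_prob big_pred0 // => t; rewrite ltnn. Qed.

Lemma card_ord_ltn k : (k <= n)%N -> #|[set m : 'I_n | (m < k)%N]| = k.
Proof.
move=> kn; have -> : [set m : 'I_n | (m < k)%N] = widen_ord kn @: 'I_k.
  apply/setP => m; rewrite inE; apply/idP/imsetP => [mk|[x _ ->] /=].
    by exists (Ordinal mk) => //; apply: val_inj.
  exact: ltn_ord.
by rewrite card_imset ?card_ord // => x y /(congr1 val) /= /val_inj.
Qed.

Lemma card_perm_ltn s i : #|[set j | (s j < s i)%N]| = s i.
Proof.
have -> : [set j | (s j < s i)%N] = s @^-1: [set m : 'I_n | (m < s i)%N].
  by apply/setP => j; rewrite !inE.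
by rewrite card_preimset ?card_ord_ltn //; [exact: ltnW | exact: perm_inj].
Qed.

Lemma eq_perm_ltn s t : (forall i j, (s i < s j)%N = (t i < t j)%N) -> s = t.
Proof.
move=> st; apply/permP => i; apply: val_inj => /=.
by rewrite -card_perm_ltn -[RHS]card_perm_ltn; apply: eq_card => j; rewrite !inE st.
Qed.

Lemma kemeny_median_Lstar p s : kemeny_median p s -> Lstar p = Lrisk p s.
Proof.
move=> med; apply/eqP; rewrite eq_le bigmin_le //=.
by apply: le_bigmin => // t _; exact: med.
Qed.

Lemma arg_min_kemeny_median p : kemeny_median p [arg min_(s < 1%g) Lrisk p s]%O.
Proof. by case: arg_minP => // s _ smin t; exact: smin. Qed.

End KendallTau.

Section StrictlyTransitive.
Variables (R : realType) (n : nat) (p : 'S_n -> R).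
Hypotheses (p1 : \sum_t p t = 1) (sst : strictly_sst p).
Implicit Types (s : 'S_n) (i j k : 'I_n).

Let q := pairwise_prob p.

Definition beats i j := 2^-1 < q i j.

Lemma pairwise_prob_neq_half i j : i != j -> q i j != 2^-1.
Proof.
move=> nij; case: (ltngtP i j) => [ij|ji|/val_inj eij]; first exact: sst.2.
- have := sst.2 _ _ ji; have := pairwise_prob_compl p1 nij; rewrite -/q => qC.
  by apply: contra => /eqP qij; apply/eqP; lra.
- by rewrite eij eqxx in nij.
Qed.

Lemma beats_total i j : i != j -> beats i j || beats j i.
Proof.
move=> nij; have := pairwise_prob_compl p1 nij; have := pairwise_prob_neq_half nij.
rewrite /beats -/q => qhalf qC.
case: (ltgtP (q i j) 2^-1) => [qlt|//|qeq]; last by rewrite qeq eqxx in qhalf.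
by apply/orP; right; lra.
Qed.

Lemma beats_irrefl i : ~~ beats i i.
Proof. by rewrite /beats /q pairwise_probxx -leNgt invr_ge0. Qed.

Lemma beats_asym i j : beats i j -> ~~ beats j i.
Proof.
have [->|nij] := eqVneq i j; first by rewrite (negbTE (beats_irrefl j)).
by have := pairwise_prob_compl p1 nij; rewrite /beats -/q -leNgt => qC qij; lra.
Qed.

Lemma beats_trans i j k : beats i j -> beats j k -> beats i k.
Proof.
move=> bij bjk; have nik : i != k.
  by apply: contraTneq bij => ->; apply: beats_asym.
rewrite /beats lt_neqAle eq_sym pairwise_prob_neq_half //.
exact: sst.1 _ j _ (ltW bij) (ltW bjk).
Qed.

Definition copeland_score i := #|[set l | beats l i]|.

Lemma copeland_score_lt i : (copeland_score i < n)%N.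
Proof.
rewrite /copeland_score -[X in (_ < X)%N]card_ord -cardsT; apply: proper_card.
rewrite properT; apply: contraNneq (beats_irrefl i) => allT.
by move/setP/(_ i): allT; rewrite !inE.
Qed.

Lemma copeland_score_beats i j :
  beats i j -> (copeland_score i < copeland_score j)%N.
Proof.
move=> bij; apply: proper_card; apply/properP; split.
  by apply/fintype.subsetP => l; rewrite !inE => bli; exact: beats_trans bli bij.
by exists i; rewrite !inE ?bij // (negbTE (beats_irrefl i)).
Qed.

Lemma copeland_score_inj : injective (fun i => Ordinal (copeland_score_lt i)).
Proof.
move=> i j /(congr1 val) /= eij; apply: contraTeq isT => nij.
by case/orP: (beats_total nij) => /copeland_score_beats; rewrite eij ltnn.
Qed.

Definition copeland_perm : 'S_n := perm copeland_score_inj.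

Lemma copeland_perm_ltn i j :
  i != j -> (copeland_perm i < copeland_perm j)%N = beats i j.
Proof.
move=> nij; rewrite !permE /=; apply/idP/idP => [lt_ij|/copeland_score_beats //].
case/orP: (beats_total nij) => // /copeland_score_beats lt_ji.
by have := ltn_trans lt_ij lt_ji; rewrite ltnn.
Qed.

Lemma discord_prob_copeland_le s i j :
  i != j -> discord_prob p copeland_perm i j <= discord_prob p s i j.
Proof.
move=> nij; have qC := pairwise_prob_compl p1 nij.
have qhalf := pairwise_prob_neq_half nij.
rewrite /discord_prob (copeland_perm_ltn nij) /beats -/q in qC qhalf *.
by have [qlt|qgt|qeq] := ltgtP (q i j) 2^-1; [| |by rewrite qeq eqxx in qhalf];
  case: ifP => _; lra.
Qed.

Lemma discord_prob_copeland_lt s i j : i != j ->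
  (s i < s j)%N != (copeland_perm i < copeland_perm j)%N ->
  discord_prob p copeland_perm i j < discord_prob p s i j.
Proof.
move=> nij; have qC := pairwise_prob_compl p1 nij.
have qhalf := pairwise_prob_neq_half nij.
rewrite /discord_prob (copeland_perm_ltn nij) /beats -/q in qC qhalf *.
by have [qlt|qgt|qeq] := ltgtP (q i j) 2^-1; [| |by rewrite qeq eqxx in qhalf];
  case: ifP => //= _ _; lra.
Qed.

Lemma copeland_perm_median : kemeny_median p copeland_perm.
Proof.
move=> s; rewrite !Lrisk_discord; apply: ler_sum => -[i j] /= ij.
by apply: discord_prob_copeland_le; rewrite neq_ltn ij.
Qed.

Lemma kemeny_median_ltn s i j : kemeny_median p s -> (i < j)%N ->
  (s i < s j)%N = (copeland_perm i < copeland_perm j)%N.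
Proof.
move=> med ij.
have [//|discord] := eqVneq (s i < s j)%N (copeland_perm i < copeland_perm j)%N.
exfalso; have nij : i != j by rewrite neq_ltn ij.
have := med copeland_perm; rewrite !Lrisk_discord.
rewrite (bigD1 (i, j)) //= [X in _ <= X](bigD1 (i, j)) //=.
apply/negP; rewrite -ltNge; apply: ltr_leD; first exact: discord_prob_copeland_lt.
apply: ler_sum => -[k l] /andP [kl _]; apply: discord_prob_copeland_le.
by rewrite neq_ltn kl.
Qed.

Lemma kemeny_median_unique s : kemeny_median p s -> s = copeland_perm.
Proof.
move=> med; apply: eq_perm_ltn => i j.
case: (ltngtP i j) => [ij|ji|/val_inj ->]; first exact: kemeny_median_ltn.
- have nij : i != j by rewrite neq_ltn ji orbT.
  by rewrite (perm_ltnNgt s nij) (perm_ltnNgt copeland_perm nij) kemeny_median_ltn.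
- by rewrite !ltnn.
Qed.

End StrictlyTransitive.

Lemma weighted_sum_minimizerP (R : numDomainType) (I : finType) (S : Type)
    (w : I -> R) (f : I -> S -> R) (sb : I -> S) : (forall i, 0 < w i) ->
  (forall sb' : I -> S, \sum_i w i * f i (sb i) <= \sum_i w i * f i (sb' i)) <->
  (forall i s, f i (sb i) <= f i s).
Proof.
move=> w_gt0; split => [sb_min i s|f_min sb']; last first.
  by apply: ler_sum => i _; apply: ler_wpM2l; [exact: ltW | exact: f_min].
have := sb_min (fun j => if j == i then s else sb j).
rewrite (bigD1 i) // [leRHS](bigD1 i) //= eqxx.
have -> : \sum_(j | j != i) w j * f j (if j == i then s else sb j) =
          \sum_(j | j != i) w j * f j (sb j) by apply: eq_bigr => j /negbTE ->.
by rewrite lerD2r ler_pM2l.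
Qed.

Local Open Scope classical_set_scope.

Lemma sum_indic_unique (U : Type) (R : pzRingType) (I : finType) (c : I -> R)
    (A : I -> set U) u i0 :
  A i0 u -> (forall i, A i u -> i = i0) -> \sum_i c i * \1_(A i) u = c i0.
Proof.
move=> Ai0 A_uniq; rewrite (bigD1 i0) //= indicE mem_set // mulr1 big1 ?addr0 //.
move=> i ni; rewrite indicE memNset ?mulr0 //.
by move/A_uniq => ei; rewrite ei eqxx in ni.
Qed.

Lemma integral_sum_indic (d : measure_display) (Omega : measurableType d)
    (R : realType) (mu : {measure set Omega -> \bar R}) (I : finType)
    (c : I -> R) (A : I -> set Omega) :
  (forall i, 0 <= c i) -> (forall i, measurable (A i)) ->
  (\int[mu]_w (\sum_i c i * \1_(A i) w)%:E = \sum_i (c i)%:E * mu (A i))%E.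
Proof.
move=> c_ge0 mA; have mcA i : measurable_fun setT (fun w => (\1_(A i) w : R)).
  exact: measurable_indic.
under eq_integral do rewrite -sumEFin.
rewrite ge0_integral_sum //; last 2 first.
- by move=> i; apply/measurable_EFinP; apply: measurable_funM.
- by move=> i w _; rewrite lee_fin mulr_ge0.
apply: eq_bigr => i _; under eq_integral do rewrite EFinM.
rewrite (ge0_integralZl_EFin _ measurableT _ _ (c_ge0 i)).
- by rewrite integral_indic // setIT.
- by move=> w _; rewrite lee_fin.
- exact/measurable_EFinP.
Qed.

Lemma partition_cell_unique (T : Type) (K : nat) (C : 'I_K -> set T) x k l :
  (forall k l : 'I_K, k != l -> C k `&` C l = set0) -> C k x -> C l x -> l = k.
Proof.
move=> disjC Ck Cl; have [//|nlk] := eqVneq l k.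
by have : (C l `&` C k) x by []; rewrite disjC.
Qed.

Lemma prule_cell (T : Type) (n K : nat) (C : 'I_K -> set T) (sb : 'I_K -> 'S_n) x k :
  (forall k l : 'I_K, k != l -> C k `&` C l = set0) -> C k x -> prule C sb x = sb k.
Proof.
move=> disjC Ck; rewrite /prule; case: pickP => [l /asboolP Cl|/(_ k)].
  by rewrite (partition_cell_unique disjC Ck Cl).
by rewrite asboolT.
Qed.

Section PartitionRule.
Context (R : realType) (d : measure_display) (Omega : measurableType d)
  (P : probability Omega R) (d' : measure_display) (T : measurableType d')
  (n K : nat) (X : Omega -> T) (Sig : Omega -> 'S_n) (C : 'I_K -> set T).
Hypotheses (mX : measurable_fun setT X)
  (mSig : forall s : 'S_n, measurable (Sig @^-1` [set s]))
  (mC : forall k, measurable (C k))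
  (disjC : forall k l : 'I_K, k != l -> C k `&` C l = set0)
  (coverC : forall x : T, exists k : 'I_K, C k x)
  (posC : forall k, (0 < P (X @^-1` C k))%E).

Let A k t := X @^-1` C k `&` Sig @^-1` [set t].

Let measurable_XC k : measurable (X @^-1` C k).
Proof. by rewrite -[_ @^-1` _]setTI; exact: mX. Qed.

Let measurable_A k t : measurable (A k t).
Proof. exact: measurableI. Qed.

Local Hint Resolve measurable_XC measurable_A : core.

Let PE (E : set Omega) : measurable E -> P E = (fine (P E))%:E.
Proof. by move=> mE; rewrite fineK // fin_num_measure. Qed.

Lemma cell_mass_gt0 k : 0 < fine (P (X @^-1` C k)).
Proof. by rewrite -lte_fin -PE. Qed.

Lemma sum_cell_events k : \sum_t fine (P (A k t)) = fine (P (X @^-1` C k)).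
Proof.
apply/EFin_inj; rewrite -sumEFin -PE // -[in RHS](setIT (X @^-1` C k)).
rewrite -integral_indic //.
transitivity (\int[P]_w (\sum_t 1 * \1_(A k t) w)%:E)%E.
  by rewrite integral_sum_indic //; apply: eq_bigr => t _; rewrite mul1e -PE.
apply: eq_integral => w _; congr (_%:E).
have -> : \sum_t 1 * \1_(A k t) w =
          \1_(X @^-1` C k) w * \sum_t 1 * \1_(Sig @^-1` [set t]) w :> R.
  by rewrite mulr_sumr; apply: eq_bigr => t _; rewrite /A indicI /= mulrCA.
by rewrite (@sum_indic_unique _ _ _ _ _ _ (Sig w)) ?mulr1 // => t <-.
Qed.

Lemma condlaw_sum1 k : \sum_t condlaw P X Sig (C k) t = 1.
Proof.
by rewrite -mulr_suml sum_cell_events mulfV // gt_eqF // cell_mass_gt0.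
Qed.

Lemma risk_prule sb : risk P X Sig (prule C sb) =
  (\sum_k fine (P (X @^-1` C k)) * Lrisk (condlaw P X Sig (C k)) (sb k))%:E.
Proof.
rewrite /risk; transitivity (\int[P]_w (\sum_(kt : 'I_K * 'S_n)
    (dtau (sb kt.1) kt.2)%:R * \1_(A kt.1 kt.2) w)%:E)%E.
  apply: eq_integral => w _; congr (_%:E); have [k Ck] := coverC (X w).
  rewrite (prule_cell sb disjC Ck) (@sum_indic_unique _ _ _ _ _ _ (k, Sig w)) //.
  by move=> [l t] [/= Cl ->]; rewrite (partition_cell_unique disjC Ck Cl).
rewrite integral_sum_indic // (eq_bigr (fun kt =>
    ((dtau (sb kt.1) kt.2)%:R * fine (P (A kt.1 kt.2)))%:E)); last first.
  by move=> kt _; rewrite EFinM -PE.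
rewrite sumEFin -(pair_bigA _ (fun k t => (dtau (sb k) t)%:R * fine (P (A k t)))).
congr (_%:E); apply: eq_bigr => k _; rewrite /Lrisk mulr_sumr.
apply: eq_bigr => t _; rewrite dtauC mulrCA mulrC /condlaw -/(A k t) mulrA mulfVK //.
by rewrite gt_eqF // cell_mass_gt0.
Qed.

Lemma risk_prule_medians sb :
  (forall k, kemeny_median (condlaw P X Sig (C k)) (sb k)) ->
  risk P X Sig (prule C sb) =
  (\sum_k P (X @^-1` C k) * (Lstar (condlaw P X Sig (C k)))%:E)%E.
Proof.
move=> med; rewrite risk_prule -sumEFin; apply: eq_bigr => k _.
by rewrite (kemeny_median_Lstar (med k)) EFinM -PE.
Qed.

End PartitionRule.

Theorem proposition8 (R : realType) (n K : nat)
  (d : measure_display) (Omega : measurableType d) (P : probability Omega R)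
  (d' : measure_display) (T : measurableType d')
  (X : Omega -> T) (Sig : Omega -> 'S_n) (C : 'I_K -> set T)
  (mX : measurable_fun setT X)
  (mSig : forall s : 'S_n, measurable (Sig @^-1` [set s]))
  (K_gt0 : (0 < K)%N)
  (mC : forall k, measurable (C k))
  (disjC : forall k l : 'I_K, k != l -> C k `&` C l = set0)
  (coverC : forall x : T, exists k : 'I_K, C k x)
  (posC : forall k, (0 < P (X @^-1` C k))%E) :
  let PC := fun k => condlaw P X Sig (C k) in
  let Rk := fun sb : 'I_K -> 'S_n => risk P X Sig (prule C sb) in
  let minimizer := fun sb => forall sb' : 'I_K -> 'S_n, (Rk sb <= Rk sb')%E in
  (forall sb : 'I_K -> 'S_n, minimizer sb <-> forall k, kemeny_median (PC k) (sb k)) /\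
  (exists sb, minimizer sb) /\
  (forall sb, minimizer sb ->
     Rk sb = (\sum_(k < K) P (X @^-1` C k) * (Lstar (PC k))%:E)%E) /\
  ((forall k, strictly_sst (PC k)) ->
     exists sstar : 'I_K -> 'S_n,
       (forall k, kemeny_median (PC k) (sstar k) /\
          forall s, kemeny_median (PC k) s -> s = sstar k) /\
       minimizer sstar /\
       (forall sb, minimizer sb -> prule C sb = prule C sstar)).
Proof.
move=> PC Rk minimizer.
have RkE := risk_prule mX mSig mC disjC coverC posC.
have minimizerP sb : minimizer sb <-> forall k, kemeny_median (PC k) (sb k).
  apply: (iff_trans _ (weighted_sum_minimizerP (fun k => Lrisk (PC k)) sb
    (cell_mass_gt0 mX mC posC))).
  by split=> sb_min sb'; move: (sb_min sb'); rewrite /Rk !RkE lee_fin.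
split; first exact: minimizerP.
split.
  exists (fun k => [arg min_(s < 1%g) Lrisk (PC k) s]%O).
  by apply/minimizerP => k; exact: arg_min_kemeny_median.
split; first by move=> sb /minimizerP; apply: risk_prule_medians.
move=> sst; pose sstar k := copeland_perm (condlaw_sum1 mX mSig mC posC k) (sst k).
have sstar_median k : kemeny_median (PC k) (sstar k).
  exact: copeland_perm_median.
have sstar_unique k s : kemeny_median (PC k) s -> s = sstar k.
  exact: kemeny_median_unique.
exists sstar; split; first by move=> k; split; [exact: sstar_median | exact: sstar_unique].
split; first exact/minimizerP.
move=> sb /minimizerP med; congr prule; apply: funext => k.
exact: sstar_unique.
Qed.
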